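(* Let $\Omega$ be a compact subset of a Euclidean space and let $\phi$ satisfy condition (A1) below. Then for every $\mu\in M(\Omega)$, \[ \phi\big(\|\mu\|_{M(\Omega)}\big)\le\Phi(\mu)\le\|\mu\|_{M(\Omega)}. \]
   Context: $M(\Omega)$ is the space of signed Borel measures on $\Omega$ of bounded total variation, with total variation norm $\|\mu\|_{M(\Omega)}$ and total variation measure $|\mu|$. With $\operatorname{atom}(\mu)=\{\omega:\mu(\{\omega\})\ne0\}$, $\Phi(\mu)=|\mu|(\Omega\setminus\operatorname{atom}(\mu))+\sum_{\omega\in\operatorname{atom}(\mu)}\phi(|\mu|(\{\omega\}))$. Condition (A1): $\phi\colon[0,\infty)\to[0,\infty)$ is differentiable, concave, nondecreasing, $\phi(0)=0$, $\phi'(0)=1$, $\phi(z)\to+\infty$ as $z\to\infty$, and there is $\gamma\ge0$ with $0\le\phi'(z_1)-\phi'(z_2)\le\gamma(z_2-z_1)$ for all $0\le z_1\le z_2$. *)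

From mathcomp Require Import all_boot all_algebra.
From mathcomp Require Import all_classical all_reals all_analysis.
Import numFieldNormedType.Exports.
Import GRing.Theory Num.Theory.

Set Implicit Arguments.
Unset Strict Implicit.
Unset Printing Implicit Defensive.

Local Open Scope classical_set_scope.
Local Open Scope ring_scope.

Notation borelRn R n := (g_sigma_algebraType (@open 'rV[R]_n)).

Section defs.
Context {R : realType} {n : nat}.
Local Notation T := (borelRn R n).

Definition total_variation (mu : set T -> \bar R) (A : set T) : \bar R :=
  ereal_sup [set x | exists (k : nat) (F : 'I_k -> set T),
    [/\ (forall i, measurable (F i)),
        (forall i, F i `<=` A),
        (forall i j, i != j -> F i `&` F j = set0) &
        x = (\sum_(i < k) `| mu (F i) |)%E]].

Definition TVnorm (Omega : set T) (mu : set T -> \bar R) : \bar R :=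
  total_variation mu Omega.

Definition atoms (mu : set T -> \bar R) : set T :=
  [set w | mu [set w] != 0%E].

Definition Phi (phi : R -> R) (Omega : set T) (mu : set T -> \bar R) : \bar R :=
  (total_variation mu (Omega `\` atoms mu) +
   \esum_(w in atoms mu) (phi (fine (total_variation mu [set w])))%:E)%E.

End defs.

(* Condition (A1), for phi : [0,oo) -> [0,oo) (values of phi on negative
   reals are irrelevant) with derivative dphi on [0,oo) (right derivative
   at 0). *)
Definition condA1 {R : realType} (phi dphi : R -> R) : Prop :=
  (forall z, 0 <= z -> 0 <= phi z) /\
      (forall z : R, 0 < z -> is_derive z 1 phi (dphi z)) /\
      (h^-1 * (phi h - phi 0) @[h --> 0^'+] --> dphi 0) /\
      (forall x y t, 0 <= x -> 0 <= y -> 0 <= t <= 1 ->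
         t * phi x + (1 - t) * phi y <= phi (t * x + (1 - t) * y)) /\
      (forall x y, 0 <= x -> x <= y -> phi x <= phi y) /\
      (phi 0 = 0 /\ dphi 0 = 1) /\
      (phi z @[z --> +oo] --> +oo) /\ (
      exists2 gamma : R, 0 <= gamma &
        forall z1 z2, 0 <= z1 -> z1 <= z2 ->
          0 <= dphi z1 - dphi z2 <= gamma * (z2 - z1)).

(* Let nu = |mu| be the variation of mu built from a Hahn decomposition; on
   Borel sets the total variation (a supremum over finite partitions) equals
   nu, and nu {w} = |mu {w}|.  As nu is finite, for each r > 0 only finitely
   many points carry mass > r, so the set A of atoms is a countable union of
   finite sets, it lies in Omega, and nu A = sum_(w in A) nu {w}.
   From phi 0 = 0, concavity and phi'(0) = 1 one gets phi z <= z and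
   subadditivity, hence phi (a + sum_w b_w) <= a + sum_w phi b_w; with
   a = nu (Omega \ A) and b_w = nu {w} this is the lower bound, and
   phi <= id gives the upper one.  No other part of (A1) is needed, and
   compactness of Omega only serves to make Omega a Borel set. *)

From Pilot Require Import Defs.
From mathcomp Require Import all_boot all_algebra.
From mathcomp Require Import all_classical all_reals all_analysis.
From mathcomp Require Import ring lra.
Import numFieldNormedType.Exports.
Import order.Order.TTheory GRing.Theory Num.Theory.
Set Implicit Arguments.
Unset Strict Implicit.
Unset Printing Implicit Defensive.

Local Open Scope classical_set_scope.
Local Open Scope ring_scope.

Section concave_at_zero.
Context {R : realType} (phi : R -> R).
Hypothesis phi0 : phi 0 = 0.
Hypothesis phi_concave : forall x y t, 0 <= x -> 0 <= y -> 0 <= t <= 1 ->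
  t * phi x + (1 - t) * phi y <= phi (t * x + (1 - t) * y).
Hypothesis phi_slope0 : h^-1 * (phi h - phi 0) @[h --> 0^'+] --> (1 : R).

Lemma concave_scale z t : 0 <= z -> 0 <= t <= 1 -> t * phi z <= phi (t * z).
Proof.
move=> z0 t01; have := phi_concave z0 (lexx 0) t01.
by rewrite phi0 !mulr0 !addr0.
Qed.

Lemma concave_le_id z : 0 <= z -> phi z <= z.
Proof.
(* For 0 < h <= z concavity gives phi z / z <= phi h / h, which tends to 1. *)
rewrite le_eqVlt => /predU1P[<-|z0]; first by rewrite phi0.
rewrite -[X in _ <= X]mul1r -ler_pdivrMr //.
apply: (cvgr_to_ge phi_slope0); near=> h.
have h0 : 0 < h by near: h; exact: nbhs_right_gt.
have hz : h <= z by near: h; exact: nbhs_right_le.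
have t01 : 0 <= h / z <= 1.
  by rewrite divr_ge0 ?(ltW h0) ?(ltW z0) //= ler_pdivrMr // mul1r.
have := concave_scale (ltW z0) t01; rewrite divfK ?gt_eqF // phi0 subr0.
have hV0 : 0 <= h^-1 by rewrite invr_ge0 ltW.
move=> /(ler_wpM2l hV0); apply: le_trans.
by rewrite mulrA mulKf ?gt_eqF // mulrC.
Unshelve. all: by end_near.
Qed.

Lemma concave_subadditive u v : 0 <= u -> 0 <= v ->
  phi (u + v) <= phi u + phi v.
Proof.
move=> u0 v0; have [uv0|uv_neq0] := eqVneq (u + v) 0.
  have [-> ->] : u = 0 /\ v = 0 by split; lra.
  by rewrite addr0 phi0 addr0.
have uv_gt0 : 0 < u + v by rewrite lt_def uv_neq0 addr_ge0.
have scale w : 0 <= w <= u + v -> w / (u + v) * phi (u + v) <= phi w.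
  move=> /andP[w0 wuv]; rewrite -[X in _ <= phi X](divfK uv_neq0).
  apply: concave_scale; first exact: ltW.
  by rewrite divr_ge0 ?(ltW uv_gt0) //= ler_pdivrMr // mul1r.
have := lerD (scale u _) (scale v _); rewrite -!mulrDl divff // mul1r.
by apply; apply/andP; split; lra.
Qed.

Lemma concave_addr_le u v : 0 <= u -> 0 <= v -> phi (u + v) <= phi u + v.
Proof.
move=> u0 v0; apply: le_trans (concave_subadditive u0 v0) _.
by rewrite lerD2l concave_le_id.
Qed.

Lemma concave_sum_le (I : Type) (s : seq I) (b : I -> R) a :
  0 <= a -> (forall i, 0 <= b i) ->
  phi (a + \sum_(i <- s) b i) <= a + \sum_(i <- s) phi (b i).
Proof.
move=> a0 b0; elim: s => [|i s IH].
  by rewrite !big_nil !addr0 concave_le_id.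
rewrite !big_cons addrCA (addrCA a).
apply: le_trans (concave_subadditive (b0 i) _) _; last by rewrite lerD2l.
by rewrite addr_ge0 ?sumr_ge0.
Qed.

Lemma concave_esum_le (I : choiceType) (A : set I) (b : I -> R) a s :
  0 <= a -> (forall i, 0 <= b i) -> \esum_(i in A) (b i)%:E = s%:E ->
  ((phi (a + s))%:E <= a%:E + \esum_(i in A) (phi (b i))%:E)%E.
Proof.
(* A finite X with sum_X b > s - e does the job: concave_addr_le absorbs the
   remainder s - sum_X b into the error e. *)
move=> a0 b0 bs; apply/lee_addgt0Pr => e e0.
have : ((s - e)%:E < \esum_(i in A) (b i)%:E)%E by rewrite bs lte_fin gtrBl.
move=> /ereal_sup_gt[_ [X [finX XA] <-]].
rewrite fsumEFin // lte_fin => sXe.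
have sXs : \sum_(i \in X) b i <= s.
  by rewrite -lee_fin -bs -fsumEFin //; apply: ereal_sup_ubound; exists X.
have phiX : ((\sum_(i \in X) phi (b i))%:E <= \esum_(i in A) (phi (b i))%:E)%E.
  by rewrite -fsumEFin //; apply: esum_ge; exists X.
apply: le_trans (leeD2r _ (leeD2l _ phiX)); rewrite -!EFinD lee_fin.
have := @concave_sum_le _ (finmap.enum_fset (fset_set X)) b a a0 b0.
rewrite -!fsbig_finite //.
have -> : a + s = (a + \sum_(i \in X) b i) + (s - \sum_(i \in X) b i) by ring.
have : 0 <= a + \sum_(i \in X) b i.
  by rewrite addr_ge0 // fsbig_finite // sumr_ge0.
rewrite -subr_ge0 in sXs => /concave_addr_le /(_ sXs); lra.
Qed.

End concave_at_zero.

Section mass_points.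
Context d (T : measurableType d) (R : realType).
Variable nu : {measure set T -> \bar R}.
Hypothesis nu_fin : fin_num_fun nu.
Hypothesis measurable_set1 : forall t : T, measurable [set t].
Local Open Scope ereal_scope.

Definition mass_points := [set t | nu [set t] != 0].

Definition heavy_points (r : R) := [set t | r%:E < nu [set t]].

Lemma finite_set_measurable (X : set T) : finite_set X -> measurable X.
Proof. by move=> /finite_set_countable; exact: countable_measurable. Qed.

Lemma measure_fsbig_set1 (X : set T) : finite_set X ->
  nu X = \sum_(t \in X) nu [set t].
Proof.
move=> finX; rewrite -[in LHS](image_id X) -bigcup_imset1 measure_fin_bigcup //.
by move=> s t _ _ [x [/= -> ->]].
Qed.

Lemma finite_heavy_points r : (0 < r)%R -> finite_set (heavy_points r).
Proof.
move=> r0; set c := fine (nu setT).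
apply: contrapT => /(infinite_set_fset (Num.truncn (c / r)).+1).
move=> [B Bheavy sizeB].
set s := finmap.enum_fset B.
have : ((size s)%:R * r)%:E <= nu setT.
  have -> : ((size s)%:R * r)%:E = \sum_(t <- s) r%:E.
    by rewrite sumEFin big_const_seq count_predT iter_addr_0 mulr_natl.
  apply: (@le_trans _ _ (\sum_(t <- s) nu [set t])).
    by rewrite big_seq [X in _ <= X]big_seq; apply: lee_sum => t /Bheavy /ltW.
  have fins : finite_set [set` s] by exact: finite_seq.
  rewrite fsbig_seq ?finmap.fset_uniq // -measure_fsbig_set1 //.
  by apply: le_measure; rewrite ?inE //; exact: finite_set_measurable.
rewrite -(fineK (nu_fin measurableT)) lee_fin -/c -ler_pdivlMr //.
apply/negP; rewrite -ltNge; apply: lt_le_trans (truncnS_gt _) _.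
by rewrite ler_nat.
Qed.

Lemma le_heavy_points r r' : (r <= r')%R -> heavy_points r' `<=` heavy_points r.
Proof. by move=> rr' t /=; apply: le_lt_trans; rewrite lee_fin. Qed.

Lemma heavy_points_sub r : (0 <= r)%R -> heavy_points r `<=` mass_points.
Proof.
move=> r0 t /= rt; rewrite /mass_points /= gt_eqF //.
by apply: le_lt_trans rt; rewrite lee_fin.
Qed.

Lemma bigcup_heavy_points : \bigcup_m heavy_points m.+1%:R^-1 = mass_points.
Proof.
apply/seteqP; split=> [t [m _]|t /= t0]; first exact: heavy_points_sub.
have nut := nu_fin (measurable_set1 t).
have x0 : (0 < fine (nu [set t]))%R.
  by rewrite fine_gt0 // lt_def t0 measure_ge0 /= -ge0_fin_numE ?measure_ge0.
exists (Num.truncn (fine (nu [set t]))^-1) => //.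
rewrite /heavy_points /= -(fineK nut) lte_fin -invf_plt ?posrE ?ltr0n //.
exact: truncnS_gt.
Qed.

Lemma measurable_mass_points : measurable mass_points.
Proof.
rewrite -bigcup_heavy_points; apply: bigcupT_measurable => m.
exact/finite_set_measurable/finite_heavy_points.
Qed.

Lemma esum_measure_set1_le (A : set T) : measurable A ->
  \esum_(t in A) nu [set t] <= nu A.
Proof.
move=> mA; apply: ge_ereal_sup => _ [X [finX XA] <-].
rewrite -measure_fsbig_set1 //; apply: le_measure => //; rewrite inE //.
exact: finite_set_measurable.
Qed.

Lemma measure_mass_points :
  nu mass_points = \esum_(t in mass_points) nu [set t].
Proof.
apply/eqP; rewrite eq_le (esum_measure_set1_le measurable_mass_points) andbT.
pose F m := heavy_points m.+1%:R^-1.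
have mF m : measurable (F m) by exact/finite_set_measurable/finite_heavy_points.
have ndF : nondecreasing_seq F.
  move=> m k mk; rewrite subsetEset; apply: le_heavy_points.
  by rewrite lef_pV2 ?posrE ?ltr0n ?ler_nat.
have mUF : measurable (\bigcup_m F m).
  by rewrite bigcup_heavy_points; exact: measurable_mass_points.
have := nondecreasing_cvg_mu (mu := nu) mF mUF ndF.
rewrite bigcup_heavy_points => cvgF.
rewrite -(cvg_lim _ cvgF) //; apply: lime_le; first exact: cvgP cvgF.
apply: nearW => m /=.
rewrite measure_fsbig_set1 //; last exact: finite_heavy_points.
apply: esum_ge; exists (F m) => //; split; first exact: finite_heavy_points.
exact: heavy_points_sub.
Qed.

Section measure_Phi.
Variable phi : R -> R.
Hypothesis phi0 : phi 0%R = 0%R.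
Hypothesis phi_concave : forall x y t, (0 <= x)%R -> (0 <= y)%R ->
  (0 <= t <= 1)%R ->
  (t * phi x + (1 - t) * phi y <= phi (t * x + (1 - t) * y))%R.
Hypothesis phi_slope0 : (h^-1 * (phi h - phi 0))%R @[h --> 0^'+] --> (1%R : R).
Variable Omega : set T.
Hypothesis mOmega : measurable Omega.
Hypothesis mass_points_sub : mass_points `<=` Omega.

Definition measure_Phi := nu (Omega `\` mass_points) +
  \esum_(t in mass_points) (phi (fine (nu [set t])))%:E.

Let nu_Omega : nu Omega = nu (Omega `\` mass_points) + nu mass_points.
Proof.
rewrite (measureDI _ mOmega measurable_mass_points).
by rewrite (setIidr mass_points_sub).
Qed.

Lemma phi_measure_le_measure_Phi : (phi (fine (nu Omega)))%:E <= measure_Phi.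
Proof.
have mOA : measurable (Omega `\` mass_points).
  exact: measurableD mOmega measurable_mass_points.
have finA := nu_fin measurable_mass_points.
rewrite /measure_Phi -[X in _ <= X + _](fineK (nu_fin mOA)).
rewrite nu_Omega (fineD (nu_fin mOA) finA).
apply: (concave_esum_le phi0 phi_concave phi_slope0
  (b := fun t => fine (nu [set t]))).
- by rewrite fine_ge0 ?measure_ge0.
- by move=> t; rewrite fine_ge0 ?measure_ge0.
rewrite (fineK finA) measure_mass_points.
by apply: eq_esum => t _; rewrite fineK ?nu_fin.
Qed.

Lemma measure_Phi_le_measure : measure_Phi <= nu Omega.
Proof.
rewrite /measure_Phi nu_Omega leeD2l // measure_mass_points.
apply: le_esum => t _; have nut := nu_fin (measurable_set1 t).
by rewrite -[X in _ <= X](fineK nut) lee_fin concave_le_id.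
Qed.

End measure_Phi.

End mass_points.

Lemma closed_measurable_open_sigma (T : ptopologicalType) (A : set T) :
  closed A -> (@open T).-sigma.-measurable A.
Proof.
move=> cA; rewrite -[A]setCK; apply: measurableC; apply: sub_sigma_algebra.
by rewrite openC.
Qed.

Section borelRn.
Context {R : realType} {n : nat}.
Local Notation T := (borelRn R n).

Lemma borelRn_measurable_set1 (t : T) : measurable [set t].
Proof.
apply: closed_measurable_open_sigma.
exact/accessible_closed_set1/hausdorff_accessible/norm_hausdorff.
Qed.

Lemma borelRn_compact_measurable (A : set 'rV[R]_n) :
  compact A -> measurable (A : set T).
Proof.
move=> cA; apply: closed_measurable_open_sigma; apply: compact_closed cA.
exact: norm_hausdorff.
Qed.

End borelRn.

Section charge_variation_hahn.
Context d (T : measurableType d) (R : realType).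
Variables (mu : {charge set T -> \bar R}) (P N : set T).
Hypothesis muPN : hahn_decomposition mu P N.
Local Notation nu := (charge_variation muPN).
Local Open Scope ereal_scope.

Lemma charge_variationE A : measurable A ->
  nu A = `|mu (A `&` P)| + `|mu (A `&` N)|.
Proof.
move=> mA; have [[mP posP] [mN negN] _ _] := muPN.
rewrite /charge_variation /= jordan_posE jordan_negE cjordan_posE cjordan_negE.
rewrite /crestr0 mem_set //= /crestr gee0_abs ?posP //; last exact: measurableI.
by rewrite lee0_abs ?negN //; exact: measurableI.
Qed.

Lemma charge_variation_set1 t :
  measurable [set t] -> nu [set t] = `|mu [set t]|.
Proof.
move=> mt; have [_ _ PUN PIN] := muPN.
have PNt : ~ (P `&` N) t by rewrite PIN.
rewrite charge_variationE // !set1I.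
have [Pt|nPt] := boolP (t \in P).
  have -> : (t \in N) = false.
    by apply/negP => /set_mem Nt; apply: PNt; split => //; exact: set_mem.
  by rewrite charge0 abse0 adde0.
have -> : t \in N.
  apply/mem_set; have : (P `|` N) t by rewrite PUN.
  by case=> // /mem_set Pt; move: nPt; rewrite Pt.
by rewrite charge0 abse0 add0e.
Qed.

End charge_variation_hahn.

Section total_variation.
Context {R : realType} {n : nat}.
Local Notation T := (borelRn R n).
Variables (mu : {charge set T -> \bar R}) (P N : set T).
Hypothesis muPN : hahn_decomposition mu P N.
Local Notation nu := (charge_variation muPN).
Local Notation TV := (Defs.total_variation mu).
Local Open Scope ereal_scope.

Lemma total_variation_le_charge_variation A : measurable A -> TV A <= nu A.
Proof.
move=> mA; apply: ge_ereal_sup => _ [k [F [mF FA dF ->]]].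
have tF : trivIset setT F.
  by move=> i j _ _; apply: contraPP => /eqP /dF -> [].
apply: (@le_trans _ _ (\sum_(i < k) nu (F i))).
  by apply: lee_sum => i _; exact: abse_charge_variation.
rewrite -(measure_bigsetU_ord nu xpredT mF tF).
apply: le_measure; rewrite ?inE //.
  exact: bigsetU_measurable.
by move=> x; rewrite -bigcup_seq_cond => -[i _ /FA].
Qed.

Lemma charge_variation_le_total_variation A : measurable A -> nu A <= TV A.
Proof.
move=> mA; have [[mP _] [mN _] _ PIN] := muPN.
rewrite charge_variationE //; apply: ereal_sup_ubound.
exists 2%N, (fun i : 'I_2 => if i == ord0 then A `&` P else A `&` N); split.
- by move=> i; case: ifP => _; exact: measurableI.
- by move=> i; case: ifP => _ x [].
- move=> [[|[|//]] ?] [[|[|//]] ?] //= _; rewrite setIACA ?PIN ?setI0 //.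
  by rewrite [N `&` P]setIC PIN setI0.
- by rewrite !big_ord_recl big_ord0 adde0.
Qed.

Lemma total_variation_charge_variation A : measurable A -> TV A = nu A.
Proof.
move=> mA; apply/eqP; rewrite eq_le total_variation_le_charge_variation //.
exact: charge_variation_le_total_variation.
Qed.

Lemma atoms_mass_points : atoms mu = mass_points nu.
Proof.
apply/funext => t; rewrite /atoms /mass_points /=.
by rewrite charge_variation_set1 ?abse_eq0 //; exact: borelRn_measurable_set1.
Qed.

Lemma PhiE (phi : R -> R) (Omega : set T) : measurable Omega ->
  Phi phi Omega mu = measure_Phi nu phi Omega.
Proof.
move=> mOmega; rewrite /Phi /measure_Phi atoms_mass_points.
rewrite total_variation_charge_variation.
  congr (_ + _); congr esum; apply/funext => t.
  rewrite total_variation_charge_variation //.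
  exact: borelRn_measurable_set1.
apply: measurableD mOmega (measurable_mass_points _ borelRn_measurable_set1).
exact: fin_num_measure.
Qed.

End total_variation.

Theorem lemmaA2 (R : realType) (n : nat) (Omega : set 'rV[R]_n)
  (phi dphi : R -> R)
  (hOmega : compact Omega)
  (hA1 : condA1 phi dphi)
  (mu : {charge set borelRn R n -> \bar R})
  (hmu : forall A : set (borelRn R n), measurable A -> mu (A `\` Omega) = 0%E) :
  ((phi (fine (TVnorm Omega mu)))%:E <= Phi phi Omega mu)%E /\
  (Phi phi Omega mu <= TVnorm Omega mu)%E.
Proof.
have [P [N muPN]] := Hahn_decomposition mu.
have [_ [_ [slope0 [concave [_ [[phi0 dphi0] _]]]]]] := hA1.
rewrite dphi0 in slope0.
have nu_fin := fin_num_measure (charge_variation muPN).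
have mOmega := borelRn_compact_measurable hOmega.
have mass_points_sub : mass_points (charge_variation muPN) `<=` Omega.
  move=> t; rewrite -atoms_mass_points /atoms /= => /eqP mu_t.
  apply: contrapT => Omega_t.
  apply: mu_t; rewrite (_ : [set t] = [set t] `\` Omega) ?hmu //.
    exact: borelRn_measurable_set1.
  by apply/seteqP; split=> [x ->|x []].
rewrite /TVnorm (total_variation_charge_variation muPN) // (PhiE muPN) //.
split.
- have := phi_measure_le_measure_Phi nu_fin borelRn_measurable_set1 phi0.
  by move=> /(_ concave slope0 _ mOmega mass_points_sub).
- have := measure_Phi_le_measure nu_fin borelRn_measurable_set1 phi0.
  by move=> /(_ concave slope0 _ mOmega mass_points_sub).
Qed.
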